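(* Let $(N,\langle\,,\rangle,F)$ be a symplectic $F$-isocrystal of dimension $2n$ which is minuscule of weight $n$. Then there exists an $O_L$-lattice $M$ in $N$ with $M^\perp=M$ such that $M\supset FM\supset\pi M$ and $(FM)^\perp=\pi^{-1}FM$.
   Context: $F$ finite over $\mathbf Q_p$ with uniformizer $\pi$, $L$ the completion of the maximal unramified extension, $O_L$ its integers, $\sigma$ the Frobenius of $L/F$. A symplectic $F$-isocrystal is a $2n$-dimensional $L$-space $N$ with a non-degenerate alternating form $\langle\,,\rangle$ and a $\sigma$-linear bijection $F$ with $\langle Fx,Fy\rangle=c\,\sigma(\langle x,y\rangle)$ for some fixed $c\in L^\times$. It is minuscule of weight $r$ if its slope vector $(\nu_1\ge\dots\ge\nu_{2n})$ (normalized by $\mathrm{val}(\pi)=1$) satisfies $0\le\nu_i\le1$ and $\sum\nu_i=r$. For a lattice $\Lambda$, $\Lambda^\perp=\{x\in N:\langle x,\Lambda\rangle\subset O_L\}$. *)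

From HB Require Import structures.
From mathcomp Require Import all_boot all_order all_algebra.
Set Implicit Arguments. Unset Strict Implicit. Unset Printing Implicit Defensive.
Import Order.TTheory GRing.Theory Num.Theory.
Local Open Scope ring_scope.

(* The field L = completion of the maximal unramified extension of a   *)
(* p-adic field F (finite over Q_p), axiomatized by its characterizing *)
(* properties:                                                         *)
(*  - L is a field of characteristic 0 with a normalized discrete      *)
(*    valuation v (defined on nonzero elements) and uniformizer pi;    *)
(*  - L is complete for v;                                             *)
(*  - the residue field O_L / pi O_L is algebraically closed of        *)
(*    characteristic p;                                                *)
(*  - sigma is a valuation-preserving field automorphism of L lifting  *)
(*    the q-power Frobenius (q = p^f, f > 0) on the residue field, and *)
(*    pi is sigma-fixed (pi lies in F = L^{sigma}, and is a uniformizer*)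
(*    of F since L/F is unramified).                                   *)

Definition intL (L : fieldType) (v : L -> int) (x : L) : Prop :=
  x = 0 \/ (0 <= v x)%R.

Definition inPk (L : fieldType) (v : L -> int) (pi : L) (k : nat) (x : L) : Prop :=
  intL v (x / pi ^+ k).

Record unramified_completion (L : fieldType) (v : L -> int) (pi : L)
    (sigma : L -> L) (p f : nat) : Prop := {
  uc_char0 : forall m : nat, (0 < m)%N -> (m%:R : L) != 0;
  uc_vM : forall x y : L, x != 0 -> y != 0 -> v (x * y) = v x + v y;
  uc_vD : forall x y : L, x != 0 -> y != 0 -> x + y != 0 ->
            Num.min (v x) (v y) <= v (x + y);
  uc_pi_neq0 : pi != 0;
  uc_vpi : v pi = 1;
  uc_complete : forall u : nat -> L,
      (forall k : nat, exists N : nat, forall m n : nat, (N <= m)%N -> (N <= n)%N ->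
          inPk v pi k (u m - u n)) ->
      exists l : L, forall k : nat, exists N : nat, forall n : nat, (N <= n)%N ->
          inPk v pi k (u n - l);
  uc_residue_closed : forall P : {poly L}, P \is monic -> (1 < size P)%N ->
      (forall i : nat, intL v P`_i) ->
      exists x : L, intL v x /\ inPk v pi 1 P.[x];
  uc_prime : prime p;
  uc_residue_char : inPk v pi 1 (p%:R : L);
  uc_f_gt0 : (0 < f)%N;
  uc_sigmaD : forall x y : L, sigma (x + y) = sigma x + sigma y;
  uc_sigmaM : forall x y : L, sigma (x * y) = sigma x * sigma y;
  uc_sigma1 : sigma 1 = 1;
  uc_sigma_bij : bijective sigma;
  uc_sigma_v : forall x : L, x != 0 -> v (sigma x) = v x;
  uc_sigma_frob : forall x : L, intL v x -> inPk v pi 1 (sigma x - x ^+ (p ^ f));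
  uc_sigma_pi : sigma pi = pi
}.

Definition bform (L : fieldType) (m : nat) (J : 'M[L]_m) (x y : 'rV[L]_m) : L :=
  (x *m J *m y^T) 0 0.

Definition symplectic_isocrystal (L : fieldType) (sigma : L -> L) (m : nat)
    (J : 'M[L]_m) (Fm : 'rV[L]_m -> 'rV[L]_m) (c : L) : Prop :=
  J \in unitmx /\
  (forall x, bform J x x = 0) /\
  (forall x y, Fm (x + y) = Fm x + Fm y) /\
  (forall (a : L) x, Fm (a *: x) = sigma a *: Fm x) /\
  bijective Fm /\
  c != 0 /\
  (forall x y, bform J (Fm x) (Fm y) = c * sigma (bform J x y)).

Definition lattice_of (L : fieldType) (v : L -> int) (d m : nat)
    (B : 'M[L]_(d, m)) (x : 'rV[L]_m) : Prop :=
  exists y : 'rV[L]_d, (forall i, intL v (y 0 i)) /\ x = y *m B.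

Definition img (T U : Type) (g : T -> U) (P : T -> Prop) (u : U) : Prop :=
  exists t, P t /\ u = g t.

Definition sub_eq (T : Type) (P Q : T -> Prop) : Prop := forall x, P x <-> Q x.
Definition sub_le (T : Type) (P Q : T -> Prop) : Prop := forall x, P x -> Q x.

Definition perp (L : fieldType) (v : L -> int) (m : nat) (J : 'M[L]_m)
    (Lam : 'rV[L]_m -> Prop) (x : 'rV[L]_m) : Prop :=
  forall y, Lam y -> intL v (bform J x y).

Definition isoclinic (L : fieldType) (v : L -> int) (pi : L) (m : nat)
    (Fm : 'rV[L]_m -> 'rV[L]_m) (U : 'M[L]_m) (r : int) (s : nat) : Prop :=
  (0 < s)%N /\
  (forall x : 'rV[L]_m, (x <= U)%MS -> (Fm x <= U)%MS) /\
  exists B : 'M[L]_(\rank U, m), row_free B /\ (B == U)%MS /\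
    sub_eq (img (iter s Fm) (lattice_of v B))
           (img (fun x => pi ^ r *: x) (lattice_of v B)).

(* Minuscule of weight w: N has a slope decomposition
   N = (+)_j U_j, U_j isoclinic of slope r_j/s_j, so that the slope
   vector consists of the r_j/s_j with multiplicity dim U_j; all slopes
   lie in [0,1] and their sum (with multiplicity) is w. *)
Definition minuscule_of_weight (L : fieldType) (v : L -> int) (pi : L) (m : nat)
    (Fm : 'rV[L]_m -> 'rV[L]_m) (w : nat) : Prop :=
  exists (k : nat) (U : 'I_k -> 'M[L]_m) (r : 'I_k -> int) (s : 'I_k -> nat),
    [/\ (forall j, isoclinic v pi Fm (U j) (r j) (s j)),
        (\sum_(j < k) U j :=: 1%:M)%MS,
        mxdirect (\sum_(j < k) U j),
        (forall j, (0 <= (r j)%:~R / (s j)%:R :> rat) && ((r j)%:~R / (s j)%:R <= 1 :> rat)) &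
        \sum_(j < k) ((\rank (U j))%:R * ((r j)%:~R / (s j)%:R)) = (w%:R : rat)].

(* Each isoclinic part of slope r/s (0 <= r <= s) of the slope
   decomposition comes with a lattice Lambda such that F^s Lambda = pi^r Lambda,
   and the sum over all parts of  sum_(i < s) pi^-floor(i r / s) F^i Lambda  is a
   lattice M0 with pi M0 <= F M0 <= M0.  The determinant of F, computed once from
   <Fx, Fy> = c sigma<x, y> and once from the slopes, gives 2 val(det F) = 2n val(c)
   and val(det F) = sum r dim / s = n, hence val(c) = 1.
   Some pi^a M0 is self-orthogonal, M <= M^perp.  As long as M <> M^perp, adding
   pi^k M^perp, F M^perp or a single vector of M^perp (according to the least k with
   pi^(k+1) M^perp <= M) gives a strictly larger self-orthogonal lattice with the
   same properties, and the length of M^perp / M, namely 2 val(det M) + val(det J),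
   decreases; so the process stops at a self-dual M.  Finally val(c) = 1 turns
   <Fx, Fy> = c sigma<x, y> into (F M)^perp = pi^-1 F M. *)

From HB Require Import structures.
From mathcomp Require Import all_boot all_order all_algebra.
From mathcomp Require Import zify ring.
From Stdlib Require Import Classical ClassicalEpsilon.
Import Order.TTheory GRing.Theory Num.Theory.
Set Implicit Arguments. Unset Strict Implicit. Unset Printing Implicit Defensive.
Local Open Scope ring_scope.

Lemma int_descent (T : Type) (mu : T -> int) (lb : int) (P Q : T -> Prop) :
  (forall t, P t -> lb <= mu t) ->
  (forall t, P t -> ~ Q t -> exists2 t', P t' & mu t' < mu t) ->
  forall t, P t -> exists2 t', P t' & Q t'.
Proof.
move=> low step t Pt; have [k] := ubnP (absz (mu t - lb)).
elim: k t Pt => // k IH t Pt lt_k.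
have [Qt|nQt] := classic (Q t); first by exists t.
have [t' Pt' lt_t't] := step t Pt nQt.
apply: (IH t' Pt'); have := low t Pt; have := low t' Pt'; lia.
Qed.

Lemma nat_threshold (Q : nat -> Prop) n : ~ Q 0 -> Q n -> exists k, ~ Q k /\ Q k.+1.
Proof.
move=> nQ0; elim: n => [//|n IH] Qn1.
by have [/IH|nQn] := classic (Q n); last exists n.
Qed.

Lemma iter_img (T : Type) (f : T -> T) (P : T -> Prop) i :
  sub_eq (iter i (img f) P) (img (iter i f) P).
Proof.
elim: i => [|i IH] y /=; first by split=> [Py|[x [Px ->]]] //; exists y.
split=> [[z [/IH [x [Px ->]] ->]]|[x [Px ->]]]; first by exists x.
by exists (iter i f x); split => //; apply/IH; exists x.
Qed.

Lemma det_castmx (R : comPzRingType) n n' (e : n = n') (A : 'M[R]_n) :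
  \det (castmx (e, e) A) = \det A.
Proof. by case: n' / e; rewrite castmx_id. Qed.

Lemma det_mxdiag (R : comPzRingType) k (p_ : 'I_k -> nat) (A_ : forall i, 'M[R]_(p_ i)) :
  \det (\mxdiag_i A_ i) = \prod_i \det (A_ i).
Proof.
elim: k p_ A_ => [|k IH] p_ A_.
  by move: (\mxdiag_i A_ i); rewrite big_ord0 => D; rewrite det_mx00 big_ord0.
by rewrite mxdiag_recl det_castmx det_ublock IH big_ord_recl.
Qed.

Lemma slope_floor_step s r i : (0 < s)%N -> (r <= s)%N ->
  (i * r %/ s <= i.+1 * r %/ s <= (i * r %/ s).+1)%N.
Proof. by move=> s_gt0 r_le_s; nia. Qed.

Lemma slope_floor_last s r : (0 < s)%N -> (r <= s)%N ->
  (s.-1 * r %/ s <= r <= (s.-1 * r %/ s).+1)%N.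
Proof. by move=> s_gt0 r_le_s; nia. Qed.

Lemma slope_unit_interval (r : int) (s : nat) : (0 < s)%N ->
  (0 <= r%:~R / s%:R :> rat) && (r%:~R / s%:R <= 1 :> rat) -> exists2 n : nat, r = n & (n <= s)%N.
Proof.
move=> s_gt0 /andP[]; have s_pos : (0 : rat) < s%:R by rewrite ltr0n.
rewrite pmulr_lge0 ?invr_gt0 // ler0z ler_pdivrMr // mul1r => r_ge0.
by case: r r_ge0 => // n _ n_le_s; exists n => //; rewrite -(ler_nat rat).
Qed.

Lemma weighted_slope_sum k (a r : 'I_k -> int) (d s : 'I_k -> nat) (w : nat) :
  (forall j, 0 < s j)%N -> (forall j, a j * (s j)%:Z = r j * (d j)%:Z) ->
  \sum_j ((d j)%:R * ((r j)%:~R / (s j)%:R)) = w%:R :> rat -> \sum_j a j = w%:Z.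
Proof.
move=> s_gt0 e_a wsum; apply: (@intr_inj rat); rewrite rmorph_sum /= -[RHS]/(w%:R : rat) -wsum.
apply: eq_bigr => j _; have sj0 : ((s j)%:R : rat) != 0 by rewrite pnatr_eq0 -lt0n.
apply: (mulIf sj0); rewrite mulrA divfK // -[(s j)%:R]/((s j)%:Z%:~R) -[(d j)%:R]/((d j)%:Z%:~R).
by rewrite -!rmorphM /= e_a mulrC.
Qed.

Section RMorphismOf.
Variables (L : fieldType) (sigma : L -> L).
Hypothesis sigmaD : forall x y, sigma (x + y) = sigma x + sigma y.
Hypothesis sigmaM : forall x y, sigma (x * y) = sigma x * sigma y.
Hypothesis sigma1 : sigma 1 = 1.

Lemma morphB_of_morphD : {morph sigma : x y / x - y}.
Proof.
have sigma0 : sigma 0 = 0 by apply: (@addrI _ (sigma 0)); rewrite -sigmaD !addr0.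
by move=> x y; rewrite sigmaD; congr (_ + _); apply/eqP; rewrite -addr_eq0 -sigmaD addNr sigma0.
Qed.

Definition rmorphism_of : {rmorphism L -> L} :=
  HB.pack sigma (GRing.isZmodMorphism.Build L L sigma morphB_of_morphD)
               (GRing.isMonoidMorphism.Build L L sigma (conj sigma1 sigmaM)).

End RMorphismOf.

(** * Lattices over a discretely valued field *)

Section DiscreteValuation.
Variables (L : fieldType) (v : L -> int) (pi : L).
Hypothesis valM : forall x y : L, x != 0 -> y != 0 -> v (x * y) = v x + v y.
Hypothesis valD : forall x y : L, x != 0 -> y != 0 -> x + y != 0 ->
  Num.min (v x) (v y) <= v (x + y).
Hypothesis pi_neq0 : pi != 0.
Hypothesis val_pi : v pi = 1.

Local Notation OL := (intL v).
Local Notation lat := (lattice_of v).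

Lemma val1 : v 1 = 0.
Proof.
have := valM (oner_neq0 L) (oner_neq0 L); rewrite mulr1 => h.
by apply: (@addrI _ (v 1)); rewrite addr0 -h.
Qed.

Lemma valV x : x != 0 -> v x^-1 = - v x.
Proof. by move=> x0; have := valM x0 (invr_neq0 x0); rewrite mulfV // val1; lia. Qed.

Lemma valN x : v (- x) = v x.
Proof.
have [->|x0] := eqVneq x 0; first by rewrite oppr0.
have N1 : (-1 : L) != 0 by rewrite oppr_eq0 oner_eq0.
have := valM N1 N1; rewrite mulrNN mulr1 val1 => vN1.
by rewrite -mulN1r valM //; lia.
Qed.

Lemma valX x k : x != 0 -> v (x ^+ k) = v x *+ k.
Proof.
move=> x0; elim: k => [|k IH]; first by rewrite expr0 val1.
by rewrite exprS valM ?expf_neq0 // IH mulrS.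
Qed.

Lemma piX_neq0 k : pi ^+ k != 0. Proof. exact: expf_neq0. Qed.

Lemma val_piX k : v (pi ^+ k) = k%:Z.
Proof. by rewrite valX // val_pi natz. Qed.

Lemma val_prod (I : finType) (x : I -> L) : (forall i, x i != 0) ->
  \prod_i x i != 0 /\ v (\prod_i x i) = \sum_i v (x i).
Proof.
move=> x0; apply: (big_rec2 (fun a b => a != 0 /\ v a = b)); first by rewrite oner_neq0 val1.
by move=> i a b _ [a0 <-]; rewrite mulf_neq0 // valM.
Qed.

Lemma intL0 : OL 0. Proof. by left. Qed.

Lemma intL1 : OL 1. Proof. by right; rewrite val1. Qed.

Lemma intLN x : OL x -> OL (- x).
Proof. by case=> [->|h]; [left; rewrite oppr0 | right; rewrite valN]. Qed.

Lemma intLD x y : OL x -> OL y -> OL (x + y).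
Proof.
have [->|x0] := eqVneq x 0; first by rewrite add0r.
have [->|y0] := eqVneq y 0; first by rewrite addr0.
have [->|xy0] := eqVneq (x + y) 0; first by left.
case=> [/eqP|hx]; first by rewrite (negbTE x0).
case=> [/eqP|hy]; first by rewrite (negbTE y0).
by right; apply: le_trans (valD x0 y0 xy0); rewrite le_min hx hy.
Qed.

Lemma intLM x y : OL x -> OL y -> OL (x * y).
Proof.
have [->|x0] := eqVneq x 0; first by rewrite mul0r; left.
have [->|y0] := eqVneq y 0; first by rewrite mulr0; left.
case=> [/eqP|hx]; first by rewrite (negbTE x0).
case=> [/eqP|hy]; first by rewrite (negbTE y0).
by right; rewrite valM // addr_ge0.
Qed.

Lemma intLX x k : OL x -> OL (x ^+ k).
Proof. by move=> hx; elim: k => [|k IH]; rewrite ?expr0 ?exprS; [exact: intL1 | exact: intLM]. Qed.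

Lemma intL_piX k : OL (pi ^+ k).
Proof. by right; rewrite val_piX. Qed.

Lemma intL_piz (z : int) : 0 <= z -> OL (pi ^ z).
Proof. by case: z => // k _; apply: intL_piX. Qed.

Lemma intLV x : v x = 0 -> OL x^-1.
Proof.
have [->|x0] := eqVneq x 0; first by rewrite invr0; left.
by move=> vx; right; rewrite valV // vx.
Qed.

Lemma intL_sum (I : Type) (r : seq I) (P : pred I) (F : I -> L) :
  (forall i, P i -> OL (F i)) -> OL (\sum_(i <- r | P i) F i).
Proof. by move=> h; apply: big_ind => //; [exact: intL0 | exact: intLD]. Qed.

Lemma intL_prod (I : Type) (r : seq I) (P : pred I) (F : I -> L) :
  (forall i, P i -> OL (F i)) -> OL (\prod_(i <- r | P i) F i).
Proof. by move=> h; apply: big_ind => //; [exact: intL1 | exact: intLM]. Qed.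

Lemma intL_eqv a b t s : a != 0 -> b != 0 -> v a = v b -> a * t = b * s ->
  OL t <-> OL s.
Proof.
move=> a0 b0 vab e.
have unit_quot x y : x != 0 -> y != 0 -> v x = v y -> OL (x / y).
  by move=> x0 y0 vxy; right; rewrite valM ?invr_neq0 // valV // vxy subrr.
split=> h.
  have -> : s = a / b * t by apply: (mulfI b0); rewrite mulrA mulrCA mulfV // mulr1 e.
  by apply: intLM h; apply: unit_quot.
have -> : t = b / a * s by apply: (mulfI a0); rewrite mulrA mulrCA mulfV // mulr1 e.
by apply: intLM h; apply: unit_quot.
Qed.

Lemma scale_piz m (a b : int) (x : 'rV[L]_m) : pi ^ a *: (pi ^ b *: x) = pi ^ (a + b) *: x.
Proof. by rewrite scalerA expfzDr. Qed.

Definition intmx p q (A : 'M[L]_(p, q)) := forall i j, OL (A i j).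

Lemma intmx_row d (y : 'rV[L]_d) : intmx y <-> forall j, OL (y 0 j).
Proof. by split=> h // i j; rewrite (ord1 i). Qed.

Lemma intmxM p q r (A : 'M[L]_(p, q)) (B : 'M[L]_(q, r)) :
  intmx A -> intmx B -> intmx (A *m B).
Proof. by move=> hA hB i j; rewrite mxE; apply: intL_sum => k _; apply: intLM. Qed.

Lemma intmxD p q (A B : 'M[L]_(p, q)) : intmx A -> intmx B -> intmx (A + B).
Proof. by move=> hA hB i j; rewrite mxE; apply: intLD. Qed.

Lemma intmxZ p q a (A : 'M[L]_(p, q)) : OL a -> intmx A -> intmx (a *: A).
Proof. by move=> ha hA i j; rewrite mxE; apply: intLM. Qed.

Lemma intmx_det n (A : 'M[L]_n) : intmx A -> OL (\det A).
Proof.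
move=> hA; apply: intL_sum => s _; apply: intLM; first exact/intLX/intLN/intL1.
by apply: intL_prod => i _; apply: hA.
Qed.

Lemma val_det_ge0 n (A : 'M[L]_n) : intmx A -> \det A != 0 -> 0 <= v (\det A).
Proof. by move=> /intmx_det [->|//]; rewrite eqxx. Qed.

Lemma intmx_inv n (A : 'M[L]_n) : intmx A -> v (\det A) = 0 -> intmx (invmx A).
Proof.
move=> hA vA; rewrite /invmx; case: ifP => // _.
apply: intmxZ; first exact: intLV.
move=> i j; rewrite mxE; apply: intLM; first exact/intLX/intLN/intL1.
by apply: intmx_det => a b; rewrite !mxE.
Qed.

Lemma intmx_piX p q (A : 'M[L]_(p, q)) : exists a : nat, intmx (pi ^+ a *: A).
Proof.
exists (\max_(ij : 'I_p * 'I_q) `|v (A ij.1 ij.2)|%N) => i j; rewrite mxE.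
have [->|A0] := eqVneq (A i j) 0; first by rewrite mulr0; left.
right; rewrite valM ?piX_neq0 // val_piX.
have /= := @leq_bigmax _ (fun ij : 'I_p * 'I_q => `|v (A ij.1 ij.2)|%N) (i, j).
lia.
Qed.

Lemma intmx_piX_mono p q (A : 'M[L]_(p, q)) a b :
  (a <= b)%N -> intmx (pi ^+ a *: A) -> intmx (pi ^+ b *: A).
Proof.
move=> le_ab h; rewrite -(subnK le_ab) exprD -scalerA.
exact/intmxZ/h/intL_piX.
Qed.

Definition submodule m (X : 'rV[L]_m -> Prop) :=
  [/\ X 0, forall x y, X x -> X y -> X (x + y) & forall a x, OL a -> X x -> X (a *: x)].

Definition pi_bounded m (X : 'rV[L]_m -> Prop) (a : nat) :=
  forall x, X x -> intmx (pi ^+ a *: x).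

Lemma lattice_submodule d m (B : 'M[L]_(d, m)) : submodule (lat B).
Proof.
split.
- by exists 0; split=> [i|]; rewrite ?mxE ?mul0mx //; left.
- move=> _ _ [y [hy ->]] [z [hz ->]]; exists (y + z); split; last by rewrite mulmxDl.
  by move=> i; rewrite mxE; apply: intLD.
- move=> a _ ha [y [hy ->]]; exists (a *: y); split; last by rewrite scalemxAl.
  by move=> i; rewrite mxE; apply: intLM.
Qed.

Lemma lattice_row d m (B : 'M[L]_(d, m)) i : lat B (row i B).
Proof.
exists (delta_mx 0 i); split; last by rewrite -rowE.
by move=> j; rewrite mxE; case: (_ && _); [apply: intL1 | apply: intL0].
Qed.

Lemma submodule_sum m (X : 'rV[L]_m -> Prop) (I : finType) (a : I -> L) (x : I -> 'rV_m) :
  submodule X -> (forall i, OL (a i)) -> (forall i, X (x i)) -> X (\sum_i a i *: x i).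
Proof. by case=> X0 XD XZ ha hx; apply: big_ind => // i _; apply: XZ. Qed.

Lemma lattice_sub_submodule d m (B : 'M[L]_(d, m)) (X : 'rV[L]_m -> Prop) :
  submodule X -> (forall i, X (row i B)) -> sub_le (lat B) X.
Proof. by move=> sX hX x [y [hy ->]]; rewrite mulmx_sum_row; apply: submodule_sum. Qed.

Lemma latticeE m (B : 'M[L]_m) x : B \in unitmx -> lat B x <-> intmx (x *m invmx B).
Proof.
move=> uB; split=> [[y [hy ->]]|h]; first by rewrite mulmxK //; apply/intmx_row.
by exists (x *m invmx B); split; [apply/intmx_row | rewrite mulmxKV].
Qed.

Lemma lattice_scale d m a (B : 'M[L]_(d, m)) :
  sub_eq (lat (a *: B)) (img (fun x => a *: x) (lat B)).
Proof.
move=> x; split; first by case=> y [hy ->]; exists (y *m B); split; [exists y | rewrite scalemxAr].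
by case=> _ [[y [hy ->]] ->]; exists y; split; [ | rewrite scalemxAr].
Qed.

Lemma lattice_bounded d m (B : 'M[L]_(d, m)) : exists a, pi_bounded (lat B) a.
Proof.
have [a ha] := intmx_piX B; exists a => _ [y [hy ->]].
by rewrite scalemxAr; apply: intmxM => //; apply/intmx_row.
Qed.

Lemma lattice_contains_piX m (B : 'M[L]_m) : B \in unitmx ->
  exists b : nat, forall w, intmx w -> lat B (pi ^+ b *: w).
Proof.
move=> uB; have [b hb] := intmx_piX (invmx B); exists b => w hw.
by apply/latticeE => //; rewrite -scalemxAl scalemxAr; apply: intmxM.
Qed.

Lemma lattice_index m (B B' : 'M[L]_m) : B \in unitmx -> sub_le (lat B) (lat B') ->
  [/\ B' \in unitmx, v (\det B') <= v (\det B) &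
      v (\det B') = v (\det B) -> sub_le (lat B') (lat B)].
Proof.
move=> uB sBB'.
have [g hg] : exists g : 'I_m -> 'rV_m, forall i,
    (forall j, OL (g i 0 j)) /\ row i B = g i *m B'.
  exact: choice (fun i => sBB' _ (lattice_row B i)).
pose Z : 'M_m := \matrix_i g i.
have eB : B = Z *m B'.
  by apply/row_matrixP => i; rewrite row_mul rowK; case: (hg i).
have hZ : intmx Z by move=> i j; rewrite mxE; apply: (proj1 (hg i)).
have dB : \det B != 0 by rewrite -unitfE -unitmxE.
have dBE : \det B = \det Z * \det B' by rewrite eB det_mulmx.
have dZ : \det Z != 0 by apply: contraNneq dB; rewrite dBE => ->; rewrite mul0r.
have dB' : \det B' != 0 by apply: contraNneq dB; rewrite dBE => ->; rewrite mulr0.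
have vB : v (\det B) = v (\det Z) + v (\det B') by rewrite dBE valM.
have vZ := val_det_ge0 hZ dZ.
split; [by rewrite unitmxE unitfE | lia | move=> eqB].
have uZ : Z \in unitmx by rewrite unitmxE unitfE.
have hZi : intmx (invmx Z) by apply: intmx_inv => //; lia.
move=> _ [y [hy ->]]; exists (y *m invmx Z); split.
  by apply/intmx_row/intmxM => //; apply/intmx_row.
by rewrite eB mulmxA mulmxKV.
Qed.

Lemma lattice_eq_val_det m (B B' : 'M[L]_m) : B \in unitmx -> sub_eq (lat B) (lat B') ->
  B' \in unitmx /\ v (\det B') = v (\det B).
Proof.
move=> uB eBB'; have [uB' le_B'B _] := lattice_index uB (fun x => (eBB' x).1).
have [_ le_BB' _] := lattice_index uB' (fun x => (eBB' x).2).
by split => //; apply/eqP; rewrite eq_le le_B'B le_BB'.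
Qed.

Lemma lattice_mulmx_row_free d m (B : 'M[L]_(d, m)) (X Y : 'M[L]_d) : row_free B ->
  sub_le (lat (X *m B)) (lat (Y *m B)) -> sub_le (lat X) (lat Y).
Proof.
move=> fB XY _ [y [hy ->]]; have [|z [hz ezy]] := XY (y *m X *m B).
  by exists y; rewrite mulmxA.
by exists z; split => //; apply: (row_free_inj fB); rewrite ezy mulmxA.
Qed.

Lemma lattice_replace_row m (B : 'M[L]_m) (y : 'rV[L]_m) i :
  y 0 i != 0 -> v (y 0 i) <= 0 -> (forall k, y 0 k != 0 -> v (y 0 i) <= v (y 0 k)) ->
  sub_le (lat B) (lat (\matrix_k (if k == i then y *m B else row k B))).
Proof.
move=> yi0 yi_le0 ymin; set B' := \matrix_k _.
have rowB' k : row k B' = if k == i then y *m B else row k B by rewrite rowK.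
apply: lattice_sub_submodule (lattice_submodule B') _ => k.
have [->|ki] := eqVneq k i; last by have := lattice_row B' k; rewrite rowB' (negbTE ki).
pose a k := if k == i then (y 0 i)^-1 else - (y 0 k / y 0 i).
have -> : row i B = \sum_k a k *: row k B'.
  rewrite (bigD1 i) //= rowB' /a eqxx mulmx_sum_row (bigD1 i) //= scalerDr scalerA mulVf //.
  rewrite scale1r scaler_sumr -addrA -big_split /= big1 ?addr0 // => l li.
  by rewrite rowB' (negbTE li) scalerA scaleNr mulrC addrN.
apply: submodule_sum (lattice_submodule B') _ (lattice_row B') => l.
rewrite /a; case: eqVneq => [_|_]; first by right; rewrite valV // oppr_ge0.
apply: intLN; have [->|yl0] := eqVneq (y 0 l) 0; first by rewrite mul0r; left.
by right; rewrite valM ?invr_neq0 // valV // subr_ge0; apply: ymin.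
Qed.

Lemma lattice_extend m (X : 'rV[L]_m -> Prop) (B : 'M[L]_m) :
  submodule X -> B \in unitmx -> sub_le (lat B) X -> ~ sub_le X (lat B) ->
  exists2 B', B' \in unitmx /\ sub_le (lat B') X & v (\det B') < v (\det B).
Proof.
move=> sX uB sBX nXB.
have [x [Xx nBx]] : exists x, X x /\ ~ lat B x.
  by apply: NNPP => h; apply: nXB => x Xx; apply: NNPP => nx; apply: h; exists x.
set y := x *m invmx B.
have [j nyj] : exists j, ~ OL (y 0 j).
  apply: NNPP => h; apply/nBx/latticeE/intmx_row => // j.
  by apply: NNPP => nj; apply: h; exists j.
have yj0 : y 0 j != 0 by apply: contra_notN nyj => /eqP ->; left.
have [i yi0 ymin] := @arg_minP _ _ _ j (fun k => y 0 k != 0) (fun k => v (y 0 k)) yj0.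
have yi_le0 : v (y 0 i) <= 0.
  by apply: le_trans (ymin j yj0) _; rewrite leNgt; apply: contra_notN nyj => /ltW; right.
set B' := \matrix_k (if k == i then y *m B else row k B).
have xB' : lat B' x by have := lattice_row B' i; rewrite rowK eqxx mulmxKV.
have [uB' le_vB eq_vB] := lattice_index uB (lattice_replace_row yi0 yi_le0 ymin).
exists B'; first split => //.
  apply: lattice_sub_submodule => // k; rewrite rowK; case: ifP => _; last exact/sBX/lattice_row.
  by rewrite mulmxKV.
by rewrite lt_neqAle le_vB andbT; apply/eqP => /eq_vB /(_ x xB').
Qed.

Lemma lattice_between m (X : 'rV[L]_m -> Prop) (B0 : 'M[L]_m) (a : nat) :
  submodule X -> B0 \in unitmx -> sub_le (lat B0) X -> pi_bounded X a ->
  exists2 B, B \in unitmx & sub_eq (lat B) X.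
Proof.
move=> sX uB0 sB0X bX.
have [B [uB sBX] sXB] : exists2 B, B \in unitmx /\ sub_le (lat B) X & sub_le X (lat B).
  apply: (@int_descent _ (fun B => v (\det B)) (- (a * m)%:Z)) (conj uB0 sB0X).
    move=> B [uB sBX] /=.
    have hB : intmx (pi ^+ a *: B).
      by move=> i j; have := bX _ (sBX _ (lattice_row B i)) 0 j; rewrite !mxE.
    have dB : \det B != 0 by rewrite -unitfE -unitmxE.
    have dB' : \det (pi ^+ a *: B) != 0 by rewrite detZ mulf_neq0 ?expf_neq0.
    have := val_det_ge0 hB dB'; rewrite detZ -exprM valM ?piX_neq0 // val_piX.
    by move=> h; rewrite -subr_ge0 opprK addrC.
  by move=> B [uB sBX] nXB; apply: lattice_extend.
by exists B => // x; split=> [/sBX|/sXB].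
Qed.

Lemma stacked_lattice_sub m k (d : 'I_k -> nat) (B : forall j, 'M[L]_(d j, m))
    (X : 'rV[L]_m -> Prop) :
  (\sum_j d j)%N = m -> \rank (\mxcol_j B j) = m -> submodule X ->
  (forall j, sub_le (lat (B j)) X) -> exists2 P : 'M[L]_m, P \in unitmx & sub_le (lat P) X.
Proof.
move=> dsum; subst m => rk sX BX; exists (\mxcol_j B j).
  by rewrite -row_full_unit /row_full rk.
by apply: lattice_sub_submodule => // l; rewrite row_mxcol; apply/BX/lattice_row.
Qed.

Lemma submodule_img_scale m a (X : 'rV[L]_m -> Prop) :
  submodule X -> submodule (img (fun x => a *: x) X).
Proof.
case=> X0 XD XZ; split.
- by exists 0; rewrite scaler0.
- by move=> _ _ [x [Xx ->]] [y [Xy ->]]; exists (x + y); rewrite scalerDr; split => //; apply: XD.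
- move=> b _ hb [x [Xx ->]]; exists (b *: x); split; last by rewrite !scalerA mulrC.
  exact: XZ.
Qed.

Lemma submodule_line m (x0 : 'rV[L]_m) : submodule (fun x => exists2 t, OL t & x = t *: x0).
Proof.
split.
- by exists 0; [left | rewrite scale0r].
- by move=> _ _ [a ha ->] [b hb ->]; exists (a + b); [apply: intLD | rewrite scalerDl].
- by move=> t _ ht [a ha ->]; exists (t * a); [apply: intLM | rewrite scalerA].
Qed.

Definition addm m (X Y : 'rV[L]_m -> Prop) x := exists a b, [/\ X a, Y b & x = a + b].

Lemma submodule_addm m (X Y : 'rV[L]_m -> Prop) :
  submodule X -> submodule Y -> submodule (addm X Y).
Proof.
case=> X0 XD XZ [Y0 YD YZ]; split.
- by exists 0, 0; rewrite addr0.
- move=> _ _ [a [b [Xa Yb ->]]] [a' [b' [Xa' Yb' ->]]].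
  by exists (a + a'), (b + b'); split; [apply: XD | apply: YD | rewrite addrACA].
- move=> t _ ht [a [b [Xa Yb ->]]].
  by exists (t *: a), (t *: b); split; [apply: XZ | apply: YZ | rewrite scalerDr].
Qed.

Lemma addm_subl m (X Y : 'rV[L]_m -> Prop) : submodule Y -> sub_le X (addm X Y).
Proof. by case=> Y0 _ _ x Xx; exists x, 0; rewrite addr0. Qed.

Lemma addm_subr m (X Y : 'rV[L]_m -> Prop) : submodule X -> sub_le Y (addm X Y).
Proof. by case=> X0 _ _ y Yy; exists 0, y; rewrite add0r. Qed.

Definition bigsum m (I : finType) (Y : I -> 'rV[L]_m -> Prop) x :=
  exists2 xs : I -> 'rV[L]_m, forall i, Y i (xs i) & x = \sum_i xs i.

Section BigSum.
Variables (m : nat) (I : finType) (Y : I -> 'rV[L]_m -> Prop).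
Hypothesis sY : forall i, submodule (Y i).

Lemma submodule_bigsum : submodule (bigsum Y).
Proof.
split.
- by exists (fun _ => 0); [move=> i; case: (sY i) | rewrite big1].
- move=> _ _ [xs hxs ->] [ys hys ->]; exists (fun i => xs i + ys i); last by rewrite big_split.
  by move=> i; case: (sY i) => _ YD _; apply: YD.
- move=> a _ ha [xs hxs ->]; exists (fun i => a *: xs i); last by rewrite scaler_sumr.
  by move=> i; case: (sY i) => _ _ YZ; apply: YZ.
Qed.

Lemma bigsum_sub i : sub_le (Y i) (bigsum Y).
Proof.
move=> x Yx; exists (fun j => if j == i then x else 0).
  by move=> j; case: eqP => [->//|_]; case: (sY j).
by rewrite (bigD1 i) //= eqxx big1 ?addr0 // => j /negbTE ->.
Qed.

Lemma img_bigsum_sub (h : 'rV[L]_m -> 'rV[L]_m) (Z : 'rV[L]_m -> Prop) :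
  h 0 = 0 -> {morph h : x y / x + y} -> submodule Z ->
  (forall i, sub_le (img h (Y i)) Z) -> sub_le (img h (bigsum Y)) Z.
Proof.
move=> h0 hD [Z0 ZD _] hY _ [_ [[xs hxs ->] ->]].
rewrite (big_morph h hD h0); apply: big_ind => // i _.
by apply: hY; exists (xs i).
Qed.

Lemma pi_bounded_bigsum : (forall i, exists a, pi_bounded (Y i) a) ->
  exists a, pi_bounded (bigsum Y) a.
Proof.
move=> /choice [a ha]; exists (\max_i a i) => _ [xs hxs ->].
rewrite scaler_sumr; apply: (big_ind (fun x : 'rV_m => intmx x)) => [i j|x y|i _].
- by rewrite mxE; left.
- exact: intmxD.
- exact/(intmx_piX_mono (leq_bigmax i))/ha.
Qed.

End BigSum.

Section Frobenius.
Variable sigma : {rmorphism L -> L}.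
Hypothesis val_sigma : forall x, x != 0 -> v (sigma x) = v x.
Hypothesis sigma_pi : sigma pi = pi.

Lemma intL_sigma x : OL (sigma x) <-> OL x.
Proof.
have [->|x0] := eqVneq x 0; first by rewrite rmorph0.
have sx0 : sigma x != 0 by rewrite fmorph_eq0.
split; case=> [/eqP|h]; rewrite ?(negbTE sx0) ?(negbTE x0) //; right.
  by rewrite -val_sigma.
by rewrite val_sigma.
Qed.

Lemma sigma_piX k : sigma (pi ^+ k) = pi ^+ k.
Proof. by rewrite rmorphXn sigma_pi. Qed.

(** * Symplectic isocrystals and Dieudonne lattices *)

Section Isocrystal.
Hypothesis sigma_bij : bijective sigma.
Variables (m : nat) (J : 'M[L]_m) (Fm : 'rV[L]_m -> 'rV[L]_m) (c : L).
Hypothesis FD : forall x y, Fm (x + y) = Fm x + Fm y.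
Hypothesis FZ : forall a x, Fm (a *: x) = sigma a *: Fm x.
Hypothesis Fbij : bijective Fm.
Hypothesis Junit : J \in unitmx.
Hypothesis Jalt : forall x, bform J x x = 0.
Hypothesis Fform : forall x y, bform J (Fm x) (Fm y) = c * sigma (bform J x y).
Hypothesis c_neq0 : c != 0.

Local Notation bf := (bform J).
Local Notation perpJ := (perp v J).

Lemma F0 : Fm 0 = 0.
Proof. by have := FZ 0 0; rewrite scale0r rmorph0 scale0r. Qed.

Lemma F_sum (I : finType) (a : I -> L) (x : I -> 'rV_m) :
  Fm (\sum_i a i *: x i) = \sum_i sigma (a i) *: Fm (x i).
Proof. by rewrite (big_morph _ FD F0); apply: eq_bigr => i _; apply: FZ. Qed.

Lemma F_piX k x : Fm (pi ^+ k *: x) = pi ^+ k *: Fm x.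
Proof. by rewrite FZ sigma_piX. Qed.

Lemma F_piz (z : int) x : Fm (pi ^ z *: x) = pi ^ z *: Fm x.
Proof. by rewrite FZ rmorphXz ?unitfE // sigma_pi. Qed.

Definition Fmx d (B : 'M[L]_(d, m)) := \matrix_i Fm (row i B).

Lemma F_mulmx d (y : 'rV[L]_d) (B : 'M[L]_(d, m)) :
  Fm (y *m B) = map_mx sigma y *m Fmx B.
Proof. by rewrite !mulmx_sum_row F_sum; apply: eq_bigr => i _; rewrite rowK mxE. Qed.

Lemma Fmx_mulmx d p (X : 'M[L]_(p, d)) (B : 'M[L]_(d, m)) :
  Fmx (X *m B) = map_mx sigma X *m Fmx B.
Proof. by apply/row_matrixP => i; rewrite rowK row_mul F_mulmx row_mul map_row. Qed.

Lemma F_lattice d (B : 'M[L]_(d, m)) : sub_eq (img Fm (lat B)) (lat (Fmx B)).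
Proof.
have [sigma' sigmaK sigma'K] := sigma_bij.
move=> x; split.
  case=> _ [[y [hy ->]] ->]; exists (map_mx sigma y); split; last exact: F_mulmx.
  by move=> i; rewrite mxE; apply/intL_sigma.
case=> z [hz ->]; exists (map_mx sigma' z *m B); split.
  by exists (map_mx sigma' z); split => // i; rewrite mxE; apply/intL_sigma; rewrite sigma'K.
by rewrite F_mulmx; congr (_ *m _); apply/matrixP => i j; rewrite !mxE sigma'K.
Qed.

Lemma iter_F_lattice d i (B : 'M[L]_(d, m)) :
  sub_eq (img (iter i Fm) (lat B)) (lat (iter i (@Fmx d) B)).
Proof.
elim: i => [|i IH] x /=; first by split=> [[y [By ->]] //|Bx]; exists x.
split=> [[y [By ->]]|].
  by apply/F_lattice; exists (iter i Fm y); split => //; apply/IH; exists y.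
by case/F_lattice => _ [/IH [y [By ->]] ->]; exists y.
Qed.

Lemma submodule_imgF (X : 'rV[L]_m -> Prop) : submodule X -> submodule (img Fm X).
Proof.
have [sigma' sigmaK sigma'K] := sigma_bij.
case=> X0 XD XZ; split.
- by exists 0; rewrite F0.
- by move=> _ _ [x [Xx ->]] [y [Xy ->]]; exists (x + y); rewrite FD; split => //; apply: XD.
- move=> a _ ha [x [Xx ->]]; exists (sigma' a *: x); split; last by rewrite FZ sigma'K.
  by apply: XZ => //; apply/intL_sigma; rewrite sigma'K.
Qed.

Lemma bformDl x x' y : bf (x + x') y = bf x y + bf x' y.
Proof. by rewrite /bform !mulmxDl mxE. Qed.

Lemma bformDr x y y' : bf x (y + y') = bf x y + bf x y'.
Proof. by rewrite /bform linearD /= mulmxDr mxE. Qed.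

Lemma bformZl a x y : bf (a *: x) y = a * bf x y.
Proof. by rewrite /bform -!scalemxAl mxE. Qed.

Lemma bformZr a x y : bf x (a *: y) = a * bf x y.
Proof. by rewrite /bform linearZ /= -scalemxAr mxE. Qed.

Lemma bform_skew x y : bf y x = - bf x y.
Proof.
have := Jalt (x + y); rewrite bformDl !bformDr !Jalt add0r addr0 => /eqP.
by rewrite addrC addr_eq0 => /eqP.
Qed.

Lemma bform_row d x (B : 'M[L]_(d, m)) i : bf x (row i B) = (x *m J *m B^T) 0 i.
Proof. by rewrite /bform !mxE; apply: eq_bigr => k _; rewrite !mxE. Qed.

Lemma gram_entry i j : J i j = bf (row i 1%:M) (row j 1%:M).
Proof. by rewrite bform_row trmx1 mulmx1 -row_mul mul1mx mxE. Qed.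

Lemma trmx_gram : J^T = - J.
Proof. by apply/matrixP => i j; rewrite !mxE !gram_entry bform_skew. Qed.

Lemma perp_submodule (X : 'rV[L]_m -> Prop) : submodule (perpJ X).
Proof.
split.
- by move=> y _; rewrite /bform mul0mx mul0mx mxE; left.
- by move=> x x' hx hx' y Xy; rewrite bformDl; apply: intLD; [apply: hx | apply: hx'].
- by move=> a x ha hx y Xy; rewrite bformZl; apply: intLM => //; apply: hx.
Qed.

Lemma perp_latticeE d (B : 'M[L]_(d, m)) x : perpJ (lat B) x <-> intmx (x *m J *m B^T).
Proof.
split=> [h i j|h _ [y [hy ->]]]; first by rewrite (ord1 i) -bform_row; apply/h/lattice_row.
rewrite /bform trmx_mul !mulmxA mxE; apply: intL_sum => k _.
by apply: intLM; [apply: h | rewrite mxE; apply: hy].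
Qed.

Lemma perp_lattice (B : 'M[L]_m) : B \in unitmx ->
  sub_eq (perpJ (lat B)) (lat (invmx (J *m B^T))).
Proof.
move=> uB x; have uJB : J *m B^T \in unitmx by rewrite unitmx_mul Junit unitmx_tr.
by rewrite perp_latticeE latticeE ?unitmx_inv // invmxK mulmxA.
Qed.

Lemma perpK_lattice (B : 'M[L]_m) : B \in unitmx -> sub_le (perpJ (perpJ (lat B))) (lat B).
Proof.
move=> uB z hz; have uBJ : B *m - J \in unitmx.
  by rewrite unitmx_mul uB -scaleN1r unitmxZ ?Junit // unitrN unitr1.
have eJ : J *m (invmx (J *m B^T))^T = - invmx B.
  have {1}-> : J = - invmx B *m (B *m - J) by rewrite mulNmx mulmxA mulVmx // mul1mx opprK.
  by rewrite trmx_inv trmx_mul trmxK trmx_gram mulmxK.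
have /perp_latticeE : perpJ (lat (invmx (J *m B^T))) z.
  by move=> y /(perp_lattice uB); apply: hz.
rewrite -mulmxA eJ mulmxN => h; apply/latticeE => // i j.
by have := intLN (h i j); rewrite mxE opprK.
Qed.

Definition dieudonne (X : 'rV[L]_m -> Prop) :=
  sub_le (img Fm X) X /\ sub_le (img (fun x => pi *: x) X) (img Fm X).

Lemma dieudonne_eq (X Y : 'rV[L]_m -> Prop) : sub_eq X Y -> dieudonne X -> dieudonne Y.
Proof.
move=> eXY [FX piX]; split; first by move=> _ [x [/eXY Xx ->]]; apply/eXY/FX; exists x.
move=> _ [x [/eXY Xx ->]]; have [w [Xw ->]] := piX (pi *: x) (ex_intro _ x (conj Xx erefl)).
by exists w; split => //; apply/eXY.
Qed.

Lemma dieudonne_piX k (X : 'rV[L]_m -> Prop) :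
  dieudonne X -> dieudonne (img (fun x => pi ^+ k *: x) X).
Proof.
case=> FX piX; split=> _ [_ [[x [Xx ->]] ->]].
  by exists (Fm x); rewrite F_piX; split => //; apply: FX; exists x.
have [w [Xw ew]] := piX (pi *: x) (ex_intro _ x (conj Xx erefl)).
by exists (pi ^+ k *: w); split; [exists w | rewrite F_piX -ew !scalerA mulrC].
Qed.

Lemma dieudonne_imgF (X : 'rV[L]_m -> Prop) : dieudonne X -> dieudonne (img Fm X).
Proof.
case=> FX piX; split=> _ [_ [[x [Xx ->]] ->]].
  by exists (Fm x); split => //; apply: FX; exists x.
have [w [Xw ew]] := piX (pi *: x) (ex_intro _ x (conj Xx erefl)).
by exists (pi *: x); split; [rewrite ew; exists w | rewrite FZ sigma_pi].
Qed.

Lemma dieudonne_bigsum (I : finType) (Y : I -> 'rV[L]_m -> Prop) :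
  (forall i, submodule (Y i)) -> (forall i, dieudonne (Y i)) -> dieudonne (bigsum Y).
Proof.
move=> sY DY; have sYs := submodule_bigsum sY; split.
  apply: img_bigsum_sub F0 FD sYs _ => // i _ [x [Yx ->]].
  by apply: bigsum_sub => //; apply: (DY i).1; exists x.
apply: img_bigsum_sub (submodule_imgF sYs) _ => //; [exact: scaler0 | exact: scalerDr |].
move=> i _ [x [Yx ->]]; have [w [Yw ->]] := (DY i).2 (pi *: x) (ex_intro _ x (conj Yx erefl)).
by exists w; split => //; apply: bigsum_sub sY _ _ Yw.
Qed.

Lemma dieudonne_addm (M Y : 'rV[L]_m -> Prop) : submodule M -> submodule Y -> dieudonne M ->
  (forall y, Y y -> addm M Y (Fm y)) -> (forall y, Y y -> img Fm (addm M Y) (pi *: y)) ->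
  dieudonne (addm M Y).
Proof.
move=> sM sY [FM piM] FY piY; have [_ MYD _] := submodule_addm sM sY.
split=> _ [_ [[a [b [Ma Yb ->]]] ->]].
  by rewrite FD; apply: MYD (FY _ Yb); apply: addm_subl => //; apply: FM; exists a.
have [a' [Ma' ea]] := piM (pi *: a) (ex_intro _ a (conj Ma erefl)).
have [w [MYw ew]] := piY _ Yb.
exists (a' + w); split; last by rewrite FD -ea -ew scalerDr.
by apply: MYD MYw; apply: addm_subl.
Qed.

Lemma dieudonne_addm_dieudonne (M Y : 'rV[L]_m -> Prop) : submodule M -> submodule Y ->
  dieudonne M -> dieudonne Y -> dieudonne (addm M Y).
Proof.
move=> sM sY DM [FY piY]; apply: dieudonne_addm => // y Yy.
  by apply: addm_subr => //; apply: FY; exists y.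
have [w [Yw ->]] := piY (pi *: y) (ex_intro _ y (conj Yy erefl)).
by exists w; split => //; apply: addm_subr.
Qed.

(** * A Dieudonne lattice from the slope decomposition *)

Definition slope_hull (s r : nat) (X : 'rV[L]_m -> Prop) :=
  bigsum (fun i : 'I_s => img (fun x => pi ^ (- Posz (i * r %/ s)%N) *: x) (iter i (img Fm) X)).

Section SlopeHull.
Variables (s r : nat) (X : 'rV[L]_m -> Prop).
Hypotheses (s_gt0 : (0 < s)%N) (r_le_s : (r <= s)%N) (sX : submodule X).
Hypothesis isoclinicX : sub_eq (img (iter s Fm) X) (img (fun x => pi ^+ r *: x) X).

Local Notation e i := (Posz (i * r %/ s)%N).
Local Notation hull := (slope_hull s r X).

Lemma submodule_slope_summand (i : 'I_s) :
  submodule (img (fun x => pi ^ (- e i) *: x) (iter i (img Fm) X)).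
Proof.
apply: submodule_img_scale.
by elim: (nat_of_ord i) => [|k IH] //=; apply: submodule_imgF.
Qed.

Lemma submodule_slope_hull : submodule hull.
Proof. exact: submodule_bigsum submodule_slope_summand. Qed.

Lemma slope_hull_summand i (lt_is : (i < s)%N) x :
  X x -> hull (pi ^ (- e i) *: iter i Fm x).
Proof.
move=> Xx; rewrite /slope_hull; apply: (bigsum_sub submodule_slope_summand (i := Ordinal lt_is)).
by exists (iter i Fm x); split => //; apply/iter_img; exists x.
Qed.

Lemma slope_hull_sub : sub_le X hull.
Proof.
by move=> x Xx; have := slope_hull_summand s_gt0 Xx; rewrite mul0n div0n oppr0 expr0z scale1r.
Qed.

Lemma slope_hull_F_stable : sub_le (img Fm hull) hull.
Proof.
have [_ _ hullZ] := submodule_slope_hull.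
apply: img_bigsum_sub F0 FD submodule_slope_hull _ => i _ [_ [[_ [/iter_img [x [Xx ->]] ->]] ->]].
rewrite F_piz; have floor_i := slope_floor_step i s_gt0 r_le_s.
have [lt_i1s|le_si1] := ltnP i.+1 s.
  have -> : pi ^ (- e i) *: Fm (iter i Fm x) =
             pi ^ (e i.+1 - e i) *: (pi ^ (- e i.+1) *: iter i.+1 Fm x).
    by rewrite scale_piz; congr (pi ^ _ *: _); lia.
  by apply: hullZ; [apply: intL_piz; lia | apply: slope_hull_summand].
have es : s = i.+1 by have := ltn_ord i; lia.
have [y [Xy ->]] : img (fun x => pi ^+ r *: x) X (Fm (iter i Fm x)).
  by apply/isoclinicX; exists x; split => //; rewrite [in RHS]es.
rewrite exprnP scale_piz; apply: hullZ (slope_hull_sub Xy); apply: intL_piz.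
by have := slope_floor_last s_gt0 r_le_s; rewrite (_ : s.-1 = i) ?es //; lia.
Qed.

Lemma slope_hull_pi_sub : sub_le (img (fun x => pi *: x) hull) (img Fm hull).
Proof.
have [_ _ hullZ] := submodule_slope_hull.
apply: img_bigsum_sub (submodule_imgF submodule_slope_hull) _ => //;
  [exact: scaler0 | exact: scalerDr |].
move=> [[|i] lt_is] _ [_ [[_ [/iter_img [x [Xx ->]] ->]] ->]] /=.
  have [w [Xw ew]] : img (iter s Fm) X (pi ^+ r *: x) by apply/isoclinicX; exists x.
  have [s' es] : exists s', s = s'.+1 by exists s.-1; rewrite prednK.
  exists (pi ^ (1 - r%:Z + e s') *: (pi ^ (- e s') *: iter s' Fm w)); split.
    apply: hullZ; last by apply: (slope_hull_summand _ Xw); rewrite es.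
    by apply: intL_piz; have := slope_floor_last s_gt0 r_le_s; rewrite es /=; lia.
  have Fw : Fm (iter s' Fm w) = pi ^+ r *: x by rewrite ew es.
  rewrite !F_piz scale_piz Fw exprnP scale_piz -{1}(expr1z pi) scale_piz.
  by congr (pi ^ _ *: _); rewrite mul0n div0n; lia.
exists (pi ^ (1 + e i - e i.+1) *: (pi ^ (- e i) *: iter i Fm x)); split.
  apply: hullZ; last by apply: (slope_hull_summand _ Xx); apply: ltnW.
  by apply: intL_piz; have := slope_floor_step i s_gt0 r_le_s; lia.
rewrite !F_piz -{1}(expr1z pi) !scale_piz; congr (pi ^ _ *: _); lia.
Qed.

Lemma dieudonne_slope_hull : dieudonne hull.
Proof. by split; [apply: slope_hull_F_stable | apply: slope_hull_pi_sub]. Qed.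

End SlopeHull.

Lemma slope_hull_bounded s r d (B : 'M[L]_(d, m)) :
  exists a, pi_bounded (slope_hull s r (lat B)) a.
Proof.
apply: pi_bounded_bigsum => i; have [a ha] := lattice_bounded (iter i (@Fmx d) B).
exists (a + i * r %/ s)%N => _ [y [/iter_img/iter_F_lattice By ->]].
have -> : pi ^+ (a + i * r %/ s) *: (pi ^ (- Posz (i * r %/ s)) *: y) = pi ^+ a *: y.
  by rewrite !exprnP scale_piz; congr (pi ^ _ *: _); lia.
exact: ha.
Qed.

Lemma dieudonne_lattice_exists k (d : 'I_k -> nat) (B : forall j, 'M[L]_(d j, m))
    (s r : 'I_k -> nat) :
  (forall j, 0 < s j)%N -> (forall j, r j <= s j)%N ->
  (forall j, sub_eq (img (iter (s j) Fm) (lat (B j)))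
                    (img (fun x => pi ^+ r j *: x) (lat (B j)))) ->
  (\sum_j d j)%N = m -> \rank (\mxcol_j B j) = m ->
  exists2 B0, B0 \in unitmx & dieudonne (lat B0).
Proof.
move=> s_gt0 r_le_s isoB dsum rk.
have shull j := submodule_slope_hull (s j) (r j) (lattice_submodule (B j)).
have sM0 := submodule_bigsum shull.
have [P uP PM0] := stacked_lattice_sub dsum rk sM0
  (fun j x Bx => bigsum_sub shull (slope_hull_sub (r j) (s_gt0 j) (lattice_submodule (B j)) Bx)).
have [a ha] := pi_bounded_bigsum (fun j => slope_hull_bounded (s j) (r j) (B j)).
have [B0 uB0 eB0] := lattice_between sM0 uP PM0 ha.
exists B0 => //; apply: dieudonne_eq (dieudonne_bigsum shull _) => [x|j].
  by split=> /eB0.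
exact: dieudonne_slope_hull (s_gt0 j) (r_le_s j) (lattice_submodule (B j)) (isoB j).
Qed.

(** * The valuation of the multiplier *)

Definition Fmat := Fmx 1%:M.

Lemma Fmx_Fmat d (B : 'M[L]_(d, m)) : Fmx B = map_mx sigma B *m Fmat.
Proof. by rewrite -{1}(mulmx1 B) Fmx_mulmx. Qed.

Lemma Fmat_gram : Fmat *m J *m Fmat^T = c *: map_mx sigma J.
Proof.
apply/matrixP => i j; have -> : (Fmat *m J *m Fmat^T) i j = bf (row i Fmat) (row j Fmat).
  by rewrite bform_row -!row_mul [RHS]mxE.
by rewrite !rowK Fform -gram_entry !mxE.
Qed.

Lemma val_det_Fmat : \det Fmat != 0 /\ v (\det Fmat) + v (\det Fmat) = v c *+ m.
Proof.
have := congr1 determinant Fmat_gram; rewrite !det_mulmx det_tr detZ det_map_mx => eA.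
have dJ : \det J != 0 by rewrite -unitfE -unitmxE.
have rhs0 : c ^+ m * sigma (\det J) != 0 by rewrite mulf_neq0 ?expf_neq0 ?fmorph_eq0.
have dA : \det Fmat != 0 by apply: contraNneq rhs0 => dA0; rewrite -eA dA0 !mul0r.
split => //; have := congr1 v eA; rewrite !valM ?mulf_neq0 ?expf_neq0 ?fmorph_eq0 //.
by rewrite val_sigma // valX // => h; apply: (@addIr _ (v (\det J))); rewrite -h addrAC.
Qed.

Lemma val_det_Fmat_similar K (P : 'M[L]_(K, m)) (D : 'M[L]_K) : K = m -> \rank P = m ->
  map_mx sigma P *m Fmat = D *m P -> \det D != 0 /\ v (\det Fmat) = v (\det D).
Proof.
move=> eK; subst K => rP eD.
have uP : P \in unitmx by rewrite -row_full_unit /row_full rP.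
have dP : \det P != 0 by rewrite -unitfE -unitmxE.
have sdP : sigma (\det P) != 0 by rewrite fmorph_eq0.
have := congr1 determinant eD; rewrite !det_mulmx det_map_mx => e.
have [dA _] := val_det_Fmat.
have dD : \det D != 0 by apply: contraTneq (mulf_neq0 sdP dA) => D0; rewrite e D0 mul0r eqxx.
split => //; have := congr1 v e; rewrite !valM // val_sigma //.
by move=> h; apply: (@addrI _ (v (\det P))); rewrite h addrC.
Qed.

Lemma val_det_isoclinic d (B : 'M[L]_(d, m)) (A : 'M[L]_d) s r :
  (0 < s)%N -> row_free B -> Fmx B = A *m B ->
  sub_eq (img (iter s Fm) (lat B)) (img (fun x => pi ^+ r *: x) (lat B)) ->
  \det A != 0 /\ v (\det A) *+ s = (r * d)%N.
Proof.
move=> s_gt0 fB FB isoB.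
(* [iA i] is the matrix of F^i in the basis B. *)
pose iA i := iter i (fun X => map_mx sigma X *m A) 1%:M.
have iterB i : iter i (@Fmx d) B = iA i *m B.
  elim: i => [|i IH]; first by rewrite /= mul1mx.
  by rewrite [LHS]/= IH Fmx_mulmx FB mulmxA.
have e : sub_eq (lat (pi ^+ r)%:M) (lat (iA s)).
  have e' x : lat (iA s *m B) x <-> lat ((pi ^+ r)%:M *m B) x.
    rewrite -iterB mul_scalar_mx; apply: iff_trans (iff_sym (iter_F_lattice _ _ x)) _.
    exact: iff_trans (isoB x) (iff_sym (lattice_scale _ _ x)).
  by move=> x; split; apply: (lattice_mulmx_row_free fB) => y /e'.
have u_pi : ((pi ^+ r)%:M : 'M[L]_d) \in unitmx.
  by rewrite unitmxE det_scalar unitfE expf_neq0 ?piX_neq0.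
have [uA] := lattice_eq_val_det u_pi e; rewrite det_scalar -exprM val_piX => vA.
have det_iA i : \det (iA i.+1) = sigma (\det (iA i)) * \det A by rewrite /= det_mulmx det_map_mx.
have dA : \det A != 0.
  have [s' es] : exists s', s = s'.+1 by exists s.-1; rewrite prednK.
  by move: uA; rewrite unitmxE unitfE es det_iA; apply: contraNneq => ->; rewrite mulr0.
have val_iA i : \det (iA i) != 0 /\ v (\det (iA i)) = v (\det A) *+ i.
  elim: i => [|i [iA0 IH]]; first by rewrite det1 val1 oner_neq0.
  by rewrite det_iA mulf_neq0 ?fmorph_eq0 // valM ?fmorph_eq0 // val_sigma // IH mulrSr.
by split => //; rewrite -(val_iA s).2 vA mulnC.
Qed.

Lemma val_det_Fmat_blocks k (d : 'I_k -> nat) (B : forall j, 'M[L]_(d j, m))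
    (A : forall j, 'M[L]_(d j)) :
  (\sum_j d j)%N = m -> \rank (\mxcol_j B j) = m -> (forall j, Fmx (B j) = A j *m B j) ->
  (forall j, \det (A j) != 0) -> v (\det Fmat) = \sum_j v (\det (A j)).
Proof.
move=> dsum rk FB dA.
have e : map_mx sigma (\mxcol_j B j) *m Fmat = \mxdiag_j A j *m \mxcol_j B j.
  have -> : map_mx sigma (\mxcol_j B j) = \mxcol_j map_mx sigma (B j).
    by apply/matrixP => i l; rewrite !mxE.
  by rewrite mxcol_mul mul_mxdiag_mxcol; apply: eq_mxcol => j; rewrite -Fmx_Fmat.
have [_ ->] := val_det_Fmat_similar dsum rk e.
by rewrite det_mxdiag; case: (val_prod dA).
Qed.

Lemma isoclinic_basis (U : 'M[L]_m) (r s : nat) : isoclinic v pi Fm U r s ->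
  exists BA : 'M[L]_(\rank U, m) * 'M[L]_(\rank U),
    [/\ row_free BA.1, (BA.1 == U)%MS, Fmx BA.1 = BA.2 *m BA.1 &
        sub_eq (img (iter s Fm) (lat BA.1)) (img (fun x => pi ^+ r *: x) (lat BA.1))].
Proof.
case=> _ [FU [B [fB [eBU isoB]]]]; exists (B, Fmx B *m pinvmx B).
split => //=.
rewrite mulmxKpV //; apply/row_subP => l; rewrite rowK (eqmxP eBU).
by apply: FU; rewrite -(eqmxP eBU) row_sub.
Qed.

Lemma minuscule_dieudonne_val_det w : minuscule_of_weight v pi Fm w ->
  (exists2 B0, B0 \in unitmx & dieudonne (lat B0)) /\ v (\det Fmat) = w%:Z.
Proof.
case=> k [U [r [s [isoU sumU dirU slopeU weightU]]]].
have s_gt0 j : (0 < s j)%N by case: (isoU j).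
have [rn er rn_le_s] : exists2 rn : 'I_k -> nat, forall j, r j = rn j & forall j, (rn j <= s j)%N.
  have /choice [rn hrn] j : exists n : nat, r j = n /\ (n <= s j)%N.
    by have [n ? ?] := slope_unit_interval (s_gt0 j) (slopeU j); exists n.
  by exists rn => j; case: (hrn j).
have hBA j := isoclinic_basis (eq_ind _ (isoclinic v pi Fm (U j) ^~ (s j)) (isoU j) _ (er j)).
pose BA j := proj1_sig (constructive_indefinite_description _ (hBA j)).
have spec j : [/\ row_free (BA j).1, ((BA j).1 == U j)%MS, Fmx (BA j).1 = (BA j).2 *m (BA j).1 &
    sub_eq (img (iter (s j) Fm) (lat (BA j).1)) (img (fun x => pi ^+ rn j *: x) (lat (BA j).1))].
  exact: proj2_sig (constructive_indefinite_description _ (hBA j)).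
have dsum : (\sum_j \rank (U j))%N = m by move/mxdirectP: dirU => /= <-; rewrite sumU mxrank1.
have rk : \rank (\mxcol_j (BA j).1) = m.
  rewrite eqmx_col (eqmx_sums (B := U)) ?sumU ?mxrank1 // => j _.
  by case: (spec j) => _ /eqmxP eBU _ _; apply: eqmx_trans (genmxE _) eBU.
split; first by apply: dieudonne_lattice_exists s_gt0 rn_le_s _ dsum rk => j; case: (spec j).
have FB j : Fmx (BA j).1 = (BA j).2 *m (BA j).1 by case: (spec j).
have vA j : \det (BA j).2 != 0 /\ v (\det (BA j).2) *+ s j = (rn j * \rank (U j))%N.
  by case: (spec j) => fB _ FBj isoB; apply: val_det_isoclinic (s_gt0 j) fB FBj isoB.
rewrite (val_det_Fmat_blocks dsum rk FB (fun j => (vA j).1)).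
apply: weighted_slope_sum s_gt0 _ weightU => j.
by rewrite er -[(s j)%:Z]natz mulr_natr (vA j).2 PoszM.
Qed.

(** * Self-dual Dieudonne lattices *)

Definition self_orthogonal (X : 'rV[L]_m -> Prop) := sub_le X (perpJ X).

Lemma dieudonne_self_orthogonal_scale (B : 'M[L]_m) : B \in unitmx -> dieudonne (lat B) ->
  exists a, [/\ pi ^+ a *: B \in unitmx, dieudonne (lat (pi ^+ a *: B))
                & self_orthogonal (lat (pi ^+ a *: B))].
Proof.
move=> uB DB; have [a ha] := intmx_piX (B *m J *m B^T).
exists a; split; first by rewrite unitmxZ // unitfE piX_neq0.
  by apply: dieudonne_eq (dieudonne_piX a DB) => x; split=> /lattice_scale.
move=> _ [y [hy ->]] _ [y' [hy' ->]].
have : intmx (y *m (pi ^+ (a + a) *: (B *m J *m B^T)) *m y'^T).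
  apply: intmxM; first apply: intmxM; first exact/intmx_row.
    by apply: intmx_piX_mono ha; apply: leq_addl.
  by move=> i j; rewrite mxE (ord1 j); apply: hy'.
move=> /(_ 0 0); congr (OL _); rewrite /bform; congr (_ 0 0).
by rewrite exprD -scalerA !linearZ /= trmx_mul -!scalemxAl !mulmxA.
Qed.

Definition admissible_extension (M Y : 'rV[L]_m -> Prop) :=
  [/\ submodule Y, sub_le Y (perpJ M), ~ sub_le Y M,
      forall y y', Y y -> Y y' -> OL (bf y y') & dieudonne (addm M Y)].

Lemma admissible_extension_addm (M Y : 'rV[L]_m -> Prop) :
  submodule M -> self_orthogonal M -> admissible_extension M Y ->
  [/\ submodule (addm M Y), dieudonne (addm M Y), self_orthogonal (addm M Y),
      sub_le (addm M Y) (perpJ M) & ~ sub_le (addm M Y) M].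
Proof.
move=> sM soM [sY YP nYM YY DMY]; have [_ PD _] := perp_submodule M.
split => //; first exact: submodule_addm.
- move=> _ [a [b [Ma Yb ->]]] _ [a' [b' [Ma' Yb' ->]]].
  rewrite bformDl !bformDr; apply: intLD; apply: intLD.
  + exact: soM.
  + by rewrite bform_skew; apply/intLN/YP.
  + exact: YP.
  + exact: YY.
- by move=> _ [a [b [Ma Yb ->]]]; apply: PD; [apply: soM | apply: YP].
- by move=> MYM; apply/nYM => y Yy; apply/MYM/addm_subr.
Qed.

Section UnitMultiplier.
Hypothesis val_c : v c = 1.

Lemma intL_pi_c t t' : pi * t = c * t' -> OL t <-> OL t'.
Proof. by apply: intL_eqv; rewrite // val_pi val_c. Qed.

Lemma intL_bformF x y : OL (bf (Fm x) (Fm y)) <-> OL (bf (pi *: x) y).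
Proof.
rewrite Fform bformZl -(intL_sigma (pi * _)) rmorphM sigma_pi.
by apply: intL_pi_c; rewrite mulrCA.
Qed.

Lemma dieudonne_perp (X : 'rV[L]_m -> Prop) : dieudonne X -> dieudonne (perpJ X).
Proof.
have [Finv FK FinvK] := Fbij.
case=> FX piX; split=> _ [x [Px ->]].
  move=> w Xw; have [w' [Xw' ew']] := piX (pi *: w) (ex_intro _ w (conj Xw erefl)).
  apply/(intL_pi_c (t' := sigma (bf x w'))); last by apply/intL_sigma; apply: Px.
  by rewrite -bformZr ew' Fform.
exists (Finv (pi *: x)); split; last by rewrite FinvK.
move=> w Xw; apply/intL_sigma/(intL_pi_c (t := bf x (Fm w))).
  by rewrite -bformZl -Fform FinvK.
by apply: Px; apply: FX; exists w.
Qed.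

Lemma perp_F (X : 'rV[L]_m -> Prop) : sub_eq (perpJ X) X ->
  sub_eq (perpJ (img Fm X)) (img (fun x => pi^-1 *: x) (img Fm X)).
Proof.
have [Finv FK FinvK] := Fbij.
move=> selfdual z; split=> [Pz|[_ [[t [Xt ->]] ->]] _ [y [Xy ->]]].
  have Xw : X (pi *: Finv z).
    by apply/selfdual => y Xy; apply/intL_bformF; rewrite FinvK; apply: Pz; exists y.
  exists (Fm (pi *: Finv z)); split; first by exists (pi *: Finv z).
  by rewrite FZ sigma_pi FinvK scalerA mulVf // scale1r.
apply/(intL_pi_c (t' := sigma (bf t y))); first by rewrite bformZl mulrA mulfV // mul1r Fform.
by apply/intL_sigma/(proj2 (selfdual t) Xt).
Qed.

Lemma admissible_extension_piX (M : 'rV[L]_m -> Prop) k : submodule M -> dieudonne M ->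
  ~ sub_le (img (fun x => pi ^+ k.+1 *: x) (perpJ M)) M ->
  sub_le (img (fun x => pi ^+ k.+2 *: x) (perpJ M)) M ->
  admissible_extension M (img (fun x => pi ^+ k.+1 *: x) (perpJ M)).
Proof.
move=> sM DM nYM piPM; have sP := perp_submodule M; have [_ _ PZ] := sP.
have sY := submodule_img_scale (pi ^+ k.+1) sP.
split => //.
- by move=> _ [x [Px ->]]; apply: PZ (intL_piX _) Px.
- move=> _ _ [x [Px ->]] [y [Py ->]].
  have -> : bf (pi ^+ k.+1 *: x) (pi ^+ k.+1 *: y) = bf (pi ^+ k *: x) (pi ^+ k.+2 *: y).
    by rewrite !bformZl !bformZr !exprS; ring.
  by apply: (PZ _ _ (intL_piX k) Px); apply: piPM; exists y.
- exact/dieudonne_addm_dieudonne/dieudonne_piX/dieudonne_perp.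
Qed.

Lemma admissible_extension_F (M : 'rV[L]_m -> Prop) : submodule M -> dieudonne M ->
  sub_le (img (fun x => pi *: x) (perpJ M)) M -> ~ sub_le (img Fm (perpJ M)) M ->
  admissible_extension M (img Fm (perpJ M)).
Proof.
move=> sM DM piPM nYM; have DP := dieudonne_perp DM.
have sY := submodule_imgF (perp_submodule M).
split => //; first exact: DP.1.
  move=> _ _ [x [Px ->]] [y [Py ->]]; apply/intL_bformF.
  by rewrite bform_skew; apply/intLN/Py/piPM; exists x.
exact/dieudonne_addm_dieudonne/dieudonne_imgF.
Qed.

Lemma admissible_extension_line (B : 'M[L]_m) x0 : B \in unitmx -> dieudonne (lat B) ->
  sub_le (img Fm (perpJ (lat B))) (lat B) -> perpJ (lat B) x0 -> ~ lat B x0 ->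
  admissible_extension (lat B) (fun x => exists2 t, OL t & x = t *: x0).
Proof.
move=> uB DM FPM Px0 nMx0.
have [Finv FK FinvK] := Fbij; have [sigma' sigmaK sigma'K] := sigma_bij.
have [_ _ MZ] := lattice_submodule B; have [_ _ PZ] := perp_submodule (lat B).
have sY := submodule_line x0.
have Mz : lat B (Finv (pi *: x0)).
  apply: (@perpK_lattice B uB) => y Py.
  apply/intL_sigma/(intL_pi_c (t := bf x0 (Fm y))); first by rewrite -bformZl -Fform FinvK.
  by apply/Px0/FPM; exists y.
split => //.
- by move=> _ [t ht ->]; apply: PZ.
- by move=> YM; apply/nMx0/YM; exists 1; [apply: intL1 | rewrite scale1r].
- by move=> _ _ [t ht ->] [t' ht' ->]; rewrite bformZl bformZr Jalt !mulr0; left.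
apply: dieudonne_addm (lattice_submodule B) (sY) DM _ _ => _ [t ht ->].
  rewrite FZ; apply: (addm_subl sY); apply: MZ; first exact/intL_sigma.
  by apply: FPM; exists x0.
exists (sigma' t *: Finv (pi *: x0)); split; last by rewrite FZ sigma'K FinvK !scalerA mulrC.
by apply: (addm_subl sY); apply: MZ => //; apply/intL_sigma; rewrite sigma'K.
Qed.

Lemma admissible_extension_exists (B : 'M[L]_m) : B \in unitmx -> dieudonne (lat B) ->
  ~ sub_le (perpJ (lat B)) (lat B) -> exists Y, admissible_extension (lat B) Y.
Proof.
move=> uB DM nPM; have sM := lattice_submodule B.
pose Q k := sub_le (img (fun x => pi ^+ k *: x) (perpJ (lat B))) (lat B).
have nQ0 : ~ Q 0.
  by move=> Q0; apply: nPM => x Px; apply: Q0; exists x; rewrite scale1r.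
have [N QN] : exists N, Q N.
  have [a ha] := lattice_bounded (invmx (J *m B^T)); have [b hb] := lattice_contains_piX uB.
  exists (b + a)%N => _ [x [Px ->]]; rewrite exprD -scalerA.
  by apply/hb/ha/perp_lattice.
have [[|k] [nQk Qk1]] := nat_threshold nQ0 QN; last first.
  by eexists; apply: admissible_extension_piX sM DM nQk Qk1.
have piPM : sub_le (img (fun x => pi *: x) (perpJ (lat B))) (lat B).
  by move=> _ [x [Px ->]]; apply: Qk1; exists x; rewrite expr1.
have [FPM|nFPM] := classic (sub_le (img Fm (perpJ (lat B))) (lat B)); last first.
  by eexists; apply: admissible_extension_F sM DM piPM nFPM.
have [x0 [Px0 nMx0]] : exists x0, perpJ (lat B) x0 /\ ~ lat B x0.
  by apply: NNPP => h; apply: nPM => x Px; apply: NNPP => nx; apply: h; exists x.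
by eexists; apply: admissible_extension_line uB DM FPM Px0 nMx0.
Qed.

Lemma self_orthogonal_det_bound (B : 'M[L]_m) : B \in unitmx -> self_orthogonal (lat B) ->
  0 <= v (\det B) + v (\det B) + v (\det J).
Proof.
move=> uB soB; have [_ le_C _] := lattice_index uB (fun x Bx => (perp_lattice uB x).1 (soB x Bx)).
have dB : \det B != 0 by rewrite -unitfE -unitmxE.
have dJ : \det J != 0 by rewrite -unitfE -unitmxE.
move: le_C; rewrite det_inv det_mulmx det_tr valV ?mulf_neq0 // valM //.
by set b := v (\det B); set j := v (\det J); lia.
Qed.

Lemma self_orthogonal_enlarge (B : 'M[L]_m) : B \in unitmx -> dieudonne (lat B) ->
  self_orthogonal (lat B) -> ~ sub_le (perpJ (lat B)) (lat B) ->
  exists2 B', [/\ B' \in unitmx, dieudonne (lat B') & self_orthogonal (lat B')]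
            & v (\det B') < v (\det B).
Proof.
move=> uB DM soM nPM; have sM := lattice_submodule B.
have [Y extY] := admissible_extension_exists uB DM nPM.
have [sY _ _ _ _] := extY.
have [sX DX soX XP nXM] := admissible_extension_addm sM soM extY.
have [a ha] := lattice_bounded (invmx (J *m B^T)).
have [B' uB' eB'] := lattice_between sX uB (addm_subl sY)
  (fun x Xx => ha x ((perp_lattice uB x).1 (XP x Xx))).
have [_ le_B'B eq_B'B] := lattice_index uB (fun x Mx => (eB' x).2 (addm_subl sY Mx)).
exists B'; first split => //.
- by apply: dieudonne_eq DX => x; split=> /eB'.
- by move=> x /eB' Xx y /eB' Xy; apply: soX.
rewrite lt_neqAle le_B'B andbT; apply/eqP => /eq_B'B B'M.
by apply: nXM => x /eB' /B'M.
Qed.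

Lemma self_dual_of_self_orthogonal (B : 'M[L]_m) : B \in unitmx -> dieudonne (lat B) ->
  self_orthogonal (lat B) ->
  exists2 B', B' \in unitmx & dieudonne (lat B') /\ sub_eq (perpJ (lat B')) (lat B').
Proof.
move=> uB DB soB.
pose P (B : 'M[L]_m) := [/\ B \in unitmx, dieudonne (lat B) & self_orthogonal (lat B)].
pose mu (B : 'M[L]_m) := v (\det B) + v (\det B) + v (\det J).
have low B0 : P B0 -> 0 <= mu B0 by case=> uB0 _ soB0; apply: self_orthogonal_det_bound.
have step B0 : P B0 -> ~ sub_le (perpJ (lat B0)) (lat B0) -> exists2 B1, P B1 & mu B1 < mu B0.
  case=> uB0 DB0 soB0 nPB0; have [B1 PB1 lt_B1] := self_orthogonal_enlarge uB0 DB0 soB0 nPB0.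
  by exists B1 => //; rewrite /mu ltrD2r; apply: ltrD.
have [B' [uB' DB' soB'] PB'] := int_descent low step (And3 uB DB soB).
by exists B' => //; split => // x; split=> [/PB'|/soB'].
Qed.

End UnitMultiplier.

Definition self_dual_dieudonne (B : 'M[L]_m) :=
  [/\ sub_eq (perpJ (lat B)) (lat B), dieudonne (lat B) &
      sub_eq (perpJ (img Fm (lat B))) (img (fun x => pi^-1 *: x) (img Fm (lat B)))].

Theorem self_dual_dieudonne_lattice_exists : v c = 1 ->
  (exists2 B0, B0 \in unitmx & dieudonne (lat B0)) ->
  exists2 B, B \in unitmx & self_dual_dieudonne B.
Proof.
move=> val_c [B0 uB0 DB0].
have [a [uB1 DB1 soB1]] := dieudonne_self_orthogonal_scale uB0 DB0.
have [B uB [DB selfdual]] := self_dual_of_self_orthogonal val_c uB1 DB1 soB1.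
by exists B => //; split => //; apply: perp_F.
Qed.

(* Needed separately: in dimension 0 the weight condition says nothing about val(c). *)
Lemma zero_dim_self_dual : m = 0%N ->
  exists2 B, B \in unitmx & self_dual_dieudonne B.
Proof.
move=> m0; have x0 (x : 'rV[L]_m) : x = 0.
  by apply/rowP => -[j lt_jm]; exfalso; move: lt_jm; rewrite m0.
have [lat0 _ _] := lattice_submodule (1%:M : 'M[L]_m).
have F0lat : img Fm (lat 1%:M) 0 by exists 0; rewrite F0.
have perp0 X : perpJ X 0 by case: (perp_submodule X).
exists 1%:M; first exact: unitmx1.
split.
- by move=> x; rewrite (x0 x); split=> _; [exact: lat0 | exact: perp0].
- by split=> _ [x [_ ->]]; rewrite ?(x0 (Fm x)) ?(x0 (pi *: x)).
- move=> x; rewrite (x0 x); split=> _; last exact: perp0.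
  by exists 0; rewrite scaler0.
Qed.

Lemma minuscule_val_multiplier n : m = (2 * n)%N -> (0 < n)%N ->
  minuscule_of_weight v pi Fm n -> v c = 1.
Proof.
move=> m2n n_gt0 /minuscule_dieudonne_val_det [_ vA].
have [_] := val_det_Fmat; rewrite vA m2n -mulr_natr natz.
by set vc := v c; nia.
Qed.

Theorem minuscule_self_dual_dieudonne_lattice n : m = (2 * n)%N ->
  minuscule_of_weight v pi Fm n ->
  exists2 B, B \in unitmx & self_dual_dieudonne B.
Proof.
move=> m2n MW; have [n0|n_gt0] := posnP n; first by apply: zero_dim_self_dual; rewrite m2n n0.
apply: self_dual_dieudonne_lattice_exists; last exact: (minuscule_dieudonne_val_det MW).1.
exact: minuscule_val_multiplier m2n n_gt0 MW.
Qed.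

End Isocrystal.
End Frobenius.
End DiscreteValuation.

Theorem lemma2p2 (L : fieldType) (v : L -> int) (pi : L) (sigma : L -> L)
    (p f : nat) (n : nat) (J : 'M[L]_(2 * n)) (Fm : 'rV[L]_(2 * n) -> 'rV[L]_(2 * n))
    (c : L) :
  unramified_completion v pi sigma p f ->
  symplectic_isocrystal sigma J Fm c ->
  minuscule_of_weight v pi Fm n ->
  exists B : 'M[L]_(2 * n),
    B \in unitmx /\
    let M := lattice_of v B in
    let FM := img Fm M in
    [/\ sub_eq (perp v J M) M,
        sub_le FM M,
        sub_le (img (fun x => pi *: x) M) FM &
        sub_eq (perp v J FM) (img (fun x => pi^-1 *: x) FM)].
Proof.
case=> _ valM valD pi_neq0 val_pi _ _ _ _ _ sigmaD sigmaM sigma1 sigma_bij val_sigma _ sigma_pi.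
case=> Junit [Jalt [FD [FZ [Fbij [c_neq0 Fform]]]]] MW.
have [B uB [selfdual [FM piM] perpFM]] := minuscule_self_dual_dieudonne_lattice
  (sigma := rmorphism_of sigmaD sigmaM sigma1) valM valD pi_neq0 val_pi val_sigma sigma_pi
  sigma_bij FD FZ Fbij Junit Jalt Fform c_neq0 erefl MW.
by exists B.
Qed.
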